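(* Consider the rendezvous game on a connected graph $G$ against Divider with exactly one agent $D_1$. Suppose that at some moment when it is Facilitator's turn to move, $R$ and $J$ occupy vertices of a cycle $C$ of $G$ that has no shortcut, and $D_1$ also occupies a vertex of $C$. Then Facilitator has a winning strategy in which $R$ and $J$ meet within at most $\ell(C)/2$ further moves of Facilitator.
   Context: Rendezvous game with adversaries. Let $G$ be a finite, simple, undirected, connected graph, let $s,t\in V(G)$ and let $k\ge 1$ be an integer. Two players play: Facilitator, who controls two agents $R$ and $J$ initially placed on $s$ and $t$ respectively, and Divider, who controls $k$ agents $D_1,\dots,D_k$ which Divider initially places on vertices of $V(G)\setminus\{s,t\}$ of his choice (several agents may share a vertex). After the initial placement the players alternate moves, Facilitator moving first. In a move, the player moves each of his agents to an adjacent vertex or leaves it where it is; no agent may be moved to a vertex currently occupied by an agent of the opponent. Both players have full information. Facilitator wins if at some moment $R$ and $J$ occupy the same vertex; Divider wins if this never happens. $\ell(P)$, $\ell(C)$ denote the number of edges of a path $P$ or cycle $C$. For a cycle $C$ of $G$ and distinct $u,v\in V(C)$, let $P_1,P_2$ be the two internally vertex-disjoint $(u,v)$-paths contained in $C$. $C$ has a $(u,v)$-shortcut if there is a $(u,v)$-path $P$ in $G-(V(C)\setminus\{u,v\})$ with $\ell(P)<\ell(P_1)$ and $\ell(P)<\ell(P_2)$; $C$ has a shortcut if it has a $(u,v)$-shortcut for some distinct $u,v\in V(C)$. *)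

From mathcomp Require Import all_boot.
Set Implicit Arguments. Unset Strict Implicit. Unset Printing Implicit Defensive.

Definition simple_graph (T : finType) (e : rel T) : Prop :=
  symmetric e /\ irreflexive e.

Definition connected_graph (T : finType) (e : rel T) : Prop :=
  forall x y : T, connect e x y.

(* A cycle of G, given as the cyclic sequence of its (distinct) vertices;
   ell(C) = size c (number of edges = number of vertices). *)
Definition is_cycle (T : finType) (e : rel T) (c : seq T) : Prop :=
  [/\ 3 <= size c, uniq c & cycle e c].

(* Lengths of the two (u,v)-paths contained in C, u v in C distinct. *)
Definition arc1 (T : finType) (c : seq T) (u v : T) : nat :=
  maxn (index u c) (index v c) - minn (index u c) (index v c).
Definition arc2 (T : finType) (c : seq T) (u v : T) : nat :=
  size c - arc1 c u v.

(* p is (the tail of) a (u,v)-path in G - (V(C) \ {u,v}):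
   the vertex sequence u :: p is a path in G, without repeated vertices,
   ending at v, and every vertex is u, v, or outside C. Its length is size p. *)
Definition avoiding_path (T : finType) (e : rel T) (c : seq T) (u v : T)
    (p : seq T) : Prop :=
  [/\ path e u p, last u p = v, uniq (u :: p)
    & all (fun x => (x == u) || (x == v) || (x \notin c)) (u :: p)].

Definition has_shortcut_uv (T : finType) (e : rel T) (c : seq T) (u v : T) : Prop :=
  exists p : seq T, avoiding_path e c u v p /\
    size p < arc1 c u v /\ size p < arc2 c u v.

Definition has_shortcut (T : finType) (e : rel T) (c : seq T) : Prop :=
  exists u v : T, [/\ u \in c, v \in c, u != v & has_shortcut_uv e c u v].

Definition step (T : finType) (e : rel T) (x y : T) : bool := (x == y) || e x y.

(* Rendezvous game with one Divider agent.
   fac_wins_within e n r j d : in the position where R is at r, J at j, D_1 at d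
   and it is Facilitator's turn, Facilitator can force R and J to occupy the
   same vertex within at most n further Facilitator moves. *)
Fixpoint fac_wins_within (T : finType) (e : rel T) (n : nat) (r j d : T) : Prop :=
  r = j \/
  match n with
  | 0 => False
  | n'.+1 =>
      exists r' j' : T,
        [/\ step e r r', r' != d, step e j j' & j' != d] /\
        forall d' : T, step e d d' -> d' != r' -> d' != j' ->
          fac_wins_within e n' r' j' d'
  end.

From mathcomp Require Import all_boot zify.
Set Implicit Arguments. Unset Strict Implicit.

(* Facilitator lets R and J walk towards each other along the
   arc of C between them that does not contain D_1; they meet after at most
   half the arc length, hence after at most ell(C)/2 moves.  Divider can only
   stop this by stepping onto an arc vertex before R or J arrive there, i.e.
   by reaching an arc vertex at distance m from the nearer of R, J in at most
   m moves.  Since C has no shortcut, any walk in G between two vertices of C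
   is at least as long as their distance along C, and on the chosen arc that
   cyclic distance from D_1 always exceeds m. *)

Definition lazy_walk (T : finType) (e : rel T) (L : nat) (x y : T) : Prop :=
  exists p : seq T, [/\ size p = L, path (step e) x p & last x p = y].

Lemma fac_wins_sym (T : finType) (e : rel T) n r j d :
  fac_wins_within e n r j d -> fac_wins_within e n j r d.
Proof.
elim: n r j d => [|n IH] r j d /= [->|]; [by left | by [] | by left |].
move=> [r' [j' [[hr hr' hj hj'] hnext]]]; right; exists j', r'.
by split=> [//|d' hd' hd'j hd'r]; apply/IH/hnext.
Qed.

Lemma approach_wins (T : finType) (e : rel T) (n : nat) :
  symmetric e ->
  forall (f : nat -> T) (k : nat) (x : T),
  k <= n.*2 ->
  (forall m, m < k -> e (f m) (f m.+1)) ->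
  x != f k ->
  (forall m L, 0 < m < k -> L <= minn m (k - m) -> ~ lazy_walk e L x (f m)) ->
  fac_wins_within e n (f 0) (f k) x.
Proof.
move=> esym; elim: n => [|n IH] f k x hk hE hk' hsafe.
  by left; congr f; lia.
have x_f1 : 1 < k -> x != f 1.
  by move=> hk1; apply/eqP => ex; apply: (hsafe 1 0); [lia | lia | exists [::]].
case: k hk hE hk' hsafe x_f1 => [|[|[|k]]] hk hE hk' hsafe x_f1; first by left.
- (* k = 1: R steps onto J. *)
  right; exists (f 1), (f 1); split; last by move=> *; case: n {IH hk}; left.
  by rewrite /step hE // eqxx orbT eq_sym hk'.
- (* k = 2: both step onto the middle vertex f 1. *)
  right; exists (f 1), (f 1); split; last by move=> *; case: n {IH hk}; left.
  by rewrite /step hE // esym hE // !orbT eq_sym x_f1.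
- (* k >= 3: both advance one vertex and Divider answers; recurse on the
     shorter walk f 1, ..., f (k+2). *)
  have x_fk : x != f k.+2.
    by apply/eqP => ex; apply: (hsafe k.+2 0); [lia | lia | exists [::]].
  right; exists (f 1), (f k.+2); split.
    by rewrite /step hE // esym hE // !orbT eq_sym x_f1 // eq_sym.
  move=> d' hd d1 d2.
  apply: (IH (fun m => f m.+1) k.+1) => //.
    by move=> m hm; apply: hE; lia.
  move=> m L hm hL [p [hs hp hl]]; apply: (hsafe m.+1 L.+1); [lia | lia |].
  by exists (d' :: p); rewrite /= hd hs hp hl.
Qed.

Definition cyc_dist (n a b : nat) : nat :=
  minn (maxn a b - minn a b) (n - (maxn a b - minn a b)).

Definition cdist (T : finType) (c : seq T) (u v : T) : nat :=
  cyc_dist (size c) (index u c) (index v c).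

Lemma cdist_refl (T : finType) (c : seq T) u : cdist c u u = 0.
Proof. rewrite /cdist /cyc_dist; lia. Qed.

Lemma cdist_triangle (T : finType) (c : seq T) u v w :
  u \in c -> v \in c -> w \in c -> cdist c u v <= cdist c u w + cdist c w v.
Proof.
rewrite -!index_mem /cdist /cyc_dist.
move: (index u c) (index v c) (index w c) (size c) => a b d n; lia.
Qed.

Lemma step_path_uniq (T : finType) (e : rel T) x p :
  path (step e) x p -> uniq (x :: p) -> path e x p.
Proof.
elim: p x => [|y p IH] x //= /andP [hs hp] /andP [hx hu].
rewrite IH // andbT.
by case/orP: hs => // /eqP exy; move: hx; rewrite exy inE eqxx.
Qed.

Section NoShortcut.
Variables (T : finType) (e : rel T) (c : seq T).
Hypothesis no_shortcut : ~ has_shortcut e c.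

(* A single excursion off C: a lazy walk from u to w (both on C) whose inner
   vertices q avoid C has length at least cdist c u w, for otherwise its
   loop-free shortening would be a (u,w)-shortcut. *)
Lemma excursion_bound u w q :
  u \in c -> w \in c -> u != w ->
  path (step e) u (rcons q w) -> all (fun y => y \notin c) q ->
  cdist c u w <= (size q).+1.
Proof.
move=> hu hw huw hp hq.
have [p' [hp' hun hsub]] : exists p', [/\ path (step e) u p', uniq (u :: p'),
    {subset p' <= rcons q w} & last u p' = last u (rcons q w)].
  by case: (shortenP hp) => p' *; exists p'.
rewrite last_rcons => hl; subst w.
rewrite leqNgt; apply/negP => hlt; apply: no_shortcut.
exists u, (last u p'); split => //.
have hsz : size p' <= (size q).+1.
  by rewrite -(size_rcons q (last u p')); apply: uniq_leq_size; case/andP: hun.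
exists p'; split; last by move: hlt hsz; rewrite /cdist /cyc_dist /arc2 /arc1; lia.
split => //; first exact: step_path_uniq.
apply/allP => y; rewrite inE; case/orP => [-> //|/hsub].
rewrite mem_rcons inE; case/orP => [-> |hy]; first by rewrite orbT.
by rewrite (allP hq y hy) !orbT.
Qed.

(* Induction
   on p, splitting the walk at each return to C (triangle inequality). *)
Lemma walk_bound_gen p u q :
  u \in c -> path (step e) u (q ++ p) -> all (fun y => y \notin c) q ->
  last u (q ++ p) \in c -> cdist c u (last u (q ++ p)) <= size q + size p.
Proof.
elim: p u q => [|z p IH] u q hu hp hq hl.
  rewrite cats0 in hl *; case: q hp hq hl => [|y q] _ hq hl.
    by rewrite cdist_refl.
  by move: (allP hq _ (mem_last y q)); rewrite /= in hl; rewrite hl.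
rewrite -cat_rcons in hp hl *.
rewrite cat_path last_rcons in hp; case/andP: hp => hp1 hp2.
case hz: (z \in c); last first.
  have := IH u (rcons q z) hu _ _ hl; rewrite size_rcons /= addSnnS; apply.
  - by rewrite cat_path last_rcons hp1 hp2.
  - by rewrite all_rcons hz hq.
have hl' : last u (rcons q z ++ p) = last z p by rewrite last_cat last_rcons.
rewrite hl' in hl *.
have {IH} hrest := IH z [::] hz hp2 isT hl.
apply: leq_trans (cdist_triangle hu hl hz) _.
rewrite addnS -addSn leq_add //.
case: (eqVneq u z) => [->|huz]; first by rewrite cdist_refl.
exact: excursion_bound hu hz huz hp1 hq.
Qed.

Lemma walk_bound L u v :
  u \in c -> v \in c -> lazy_walk e L u v -> cdist c u v <= L.
Proof.
move=> hu hv [p [<- hp hl]].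
by have := @walk_bound_gen p u [::] hu hp isT; rewrite /= hl; apply.
Qed.

End NoShortcut.

(* Positions on C are indices modulo n = size c.  [wrap n t] reduces t < 2n
   modulo n, and [offset n a b] is how many forward steps lead from a to b. *)
Definition wrap (n t : nat) : nat := if t < n then t else t - n.

Definition offset (n a b : nat) : nat := wrap n (b + n - a).

Lemma wrap_cases n t : (t < n /\ wrap n t = t) \/ (n <= t /\ wrap n t = t - n).
Proof. by rewrite /wrap; case: ltnP; [left|right]. Qed.

(* Turns every [wrap] in the goal into a case split, leaving linear arithmetic. *)
Ltac unfold_wrap := repeat match goal with
 | |- context[wrap ?n ?t] => lazymatch t with context[wrap _ _] => fail | _ =>
     case: (wrap_cases n t) => [[+ ->]|[+ ->]] end
end.

Lemma wrap_lt n a m : a < n -> m < n -> wrap n (a + m) < n.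
Proof. by move=> ha hm; unfold_wrap; lia. Qed.

Lemma wrapS n a m : a < n -> m < n -> wrap n (a + m.+1) = wrap n (wrap n (a + m)).+1.
Proof. by move=> ha hm; unfold_wrap; lia. Qed.

Lemma offset_lt n a b : a < n -> b < n -> offset n a b < n.
Proof. by rewrite /offset => ha hb; unfold_wrap; lia. Qed.

Lemma wrap_offset n a b : a < n -> b < n -> wrap n (a + offset n a b) = b.
Proof. by rewrite /offset => ha hb; unfold_wrap; lia. Qed.

Lemma cyc_dist_wrap n a x y : a < n -> x < n -> y < n ->
  cyc_dist n (wrap n (a + x)) (wrap n (a + y)) = cyc_dist n x y.
Proof. by rewrite /cyc_dist => ha hx hy; unfold_wrap; lia. Qed.

(* For d distinct from a and b, walking forward from one of a, b reaches the
   other before d: one of the two arcs between a and b avoids d. *)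
Lemma free_arc_cases n a b d : a < n -> b < n -> d < n -> d != a -> d != b ->
  offset n a b < offset n a d \/ offset n b a < offset n b d.
Proof. by rewrite /offset => ha hb hd hda hdb; unfold_wrap; lia. Qed.

Lemma cycle_edge (T : eqType) (e : rel T) (c : seq T) x0 i :
  cycle e c -> i < size c -> e (nth x0 c i) (nth x0 c (wrap (size c) i.+1)).
Proof.
case: c => [|y c] //= hc hi.
move/(pathP x0): hc => /(_ i); rewrite size_rcons => /(_ hi).
rewrite -rcons_cons !nth_rcons /= /wrap !ltnS.
have hi' : i <= size c by [].
by rewrite hi'; case: ltngtP hi' => // -> _; rewrite subnn.
Qed.

Lemma free_arc_wins (T : finType) (e : rel T) (c : seq T) (r j d : T) :
  symmetric e -> uniq c -> cycle e c -> ~ has_shortcut e c ->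
  r \in c -> j \in c -> d \in c -> d != r -> d != j ->
  offset (size c) (index r c) (index j c) < offset (size c) (index r c) (index d c) ->
  fac_wins_within e (size c %/ 2) r j d.
Proof.
move=> esym hu hc nsc hr hj hd hdr hdj.
set n := size c; set a := index r c; set k := offset n a _; set q := offset n a _.
move=> hkq.
have ha : a < n by rewrite index_mem.
have hq : q < n by apply: offset_lt; rewrite ?index_mem.
pose f m := nth r c (wrap n (a + m)).
have f_at b : b \in c -> f (offset n a (index b c)) = b.
  by move=> hb; rewrite /f wrap_offset ?index_mem ?nth_index.
have f0 : f 0 = r by rewrite /f addn0 /wrap ha nth_index.
rewrite -f0 -(f_at j hj); apply: approach_wins => //; rewrite ?f0 ?f_at //.
- (* the arc r..j has length k < q < n, hence k <= 2 (n %/ 2) *)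
  lia.
- move=> m hm; have hm_n : m < n by lia.
  by rewrite /f wrapS //; apply: cycle_edge => //; apply: wrap_lt.
- move=> m L hm hL hw.
  have hm_n : m < n by lia.
  have hfm : wrap n (a + m) < n by apply: wrap_lt.
  have hd_at : index d c = wrap n (a + q) by rewrite wrap_offset ?index_mem.
  have := walk_bound nsc hd (mem_nth r hfm) hw.
  rewrite /cdist hd_at index_uniq // cyc_dist_wrap // /cyc_dist; lia.
Qed.

Theorem claim2 (T : finType) (e : rel T) (c : seq T) (r j d : T) :
  simple_graph e -> connected_graph e ->
  is_cycle e c -> ~ has_shortcut e c ->
  r \in c -> j \in c -> d \in c ->
  d != r -> d != j ->
  fac_wins_within e (size c %/ 2) r j d.
Proof.
move=> [esym _] _ [_ hu hc] nsc hr hj hd hdr hdj.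
have index_neq x y : x \in c -> y \in c -> x != y -> index x c != index y c.
  by move=> hx hy; apply: contra => /eqP /(index_inj x hx hy) ->.
have pos x : x \in c -> index x c < size c by rewrite index_mem.
have [arc_rj | arc_jr] := free_arc_cases (pos r hr) (pos j hj) (pos d hd)
  (index_neq d r hd hr hdr) (index_neq d j hd hj hdj).
- exact: free_arc_wins.
- exact/fac_wins_sym/free_arc_wins.
Qed.
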